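(* For every $P\in\Delta_{BD}$ and every $\varepsilon>0$ there exists a finite partition $\{C_1,\dots,C_n\}$ of $\Omega$ such that each $C_i$ is a cylinder and $P(C_i)\le\varepsilon$ for each $i$.
   Context: Let $\Omega=\{0,1\}^{\mathbb N}$; $\omega^t$ is the cylinder of paths agreeing with $\omega$ in the first $t$ coordinates (cylinders have varying lengths). $\Sigma$ is a fixed $\sigma$-algebra containing all cylinders; $\mathbb P$ the finitely additive probabilities on $(\Omega,\Sigma)$. $P$ is strongly nonatomic if for every $E\in\Sigma$, $\alpha\in[0,1]$ there is $F\in\Sigma$, $F\subseteq E$, $P(F)=\alpha P(E)$. $R(E\mid\omega^t)=R(E\cap\omega^t)/R(\omega^t)$ when $R(\omega^t)>0$. $P$ merges with $Q$ if for every $\varepsilon>0$, $Q(\{\omega:\sup_{E\in\Sigma}|P(E\mid\omega^t)-Q(E\mid\omega^t)|>\varepsilon\})\to0$ as $t\to\infty$ (cylinders with $Q(\omega^t)>0=P(\omega^t)$ counted in the set). $Q\ll P$: $P(E_n)\to0$ implies $Q(E_n)\to0$ for every sequence in $\Sigma$. $\Delta_{BD}$ is the set of strongly nonatomic $P\in\mathbb P$ that merge with every $Q\in\mathbb P$ with $Q\ll P$. *)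

From Stdlib Require Export Reals.
Open Scope R_scope.

Definition Omega := nat -> bool.
Definition event := Omega -> Prop.

Definition fullset : event := fun _ => True.
Definition inter (E F : event) : event := fun w => E w /\ F w.
Definition union (E F : event) : event := fun w => E w \/ F w.
Definition compl (E : event) : event := fun w => ~ E w.
Definition subset (E F : event) : Prop := forall w, E w -> F w.
Definition disjoint (E F : event) : Prop := forall w, E w -> F w -> False.

Definition cyl (omega : Omega) (t : nat) : event :=
  fun w => forall i, (i < t)%nat -> w i = omega i.

Definition is_cylinder (C : event) : Prop := exists omega t, C = cyl omega t.

Definition is_sigma_algebra (Sigma : event -> Prop) : Prop :=
  Sigma fullset /\
  (forall E, Sigma E -> Sigma (compl E)) /\
  (forall En : nat -> event, (forall n, Sigma (En n)) ->
      Sigma (fun w => exists n, En n w)).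

Definition contains_cylinders (Sigma : event -> Prop) : Prop :=
  forall omega t, Sigma (cyl omega t).

(* Finitely additive probability on (Omega, Sigma); values outside Sigma are
   irrelevant. *)
Definition is_fap (Sigma : event -> Prop) (P : event -> R) : Prop :=
  P fullset = 1 /\
  (forall E, Sigma E -> 0 <= P E) /\
  (forall E F, Sigma E -> Sigma F -> disjoint E F -> P (union E F) = P E + P F).

Definition strongly_nonatomic (Sigma : event -> Prop) (P : event -> R) : Prop :=
  forall E, Sigma E -> forall alpha, 0 <= alpha <= 1 ->
    exists F, Sigma F /\ subset F E /\ P F = alpha * P E.

(* R(E | omega^t) = R(E /\ omega^t) / R(omega^t)  (used when R(omega^t) > 0). *)
Definition cond (Rm : event -> R) (E : event) (omega : Omega) (t : nat) : R :=
  Rm (inter E (cyl omega t)) / Rm (cyl omega t).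

(* The set { omega : sup_{E in Sigma} |P(E|omega^t) - Q(E|omega^t)| > eps },
   with cylinders where Q(omega^t) > 0 = P(omega^t) counted in the set.
   (Cylinders with Q(omega^t) = 0 are Q-null and are left out.) *)
Definition bad_set (Sigma : event -> Prop) (P Q : event -> R) (eps : R) (t : nat)
  : event :=
  fun omega => Q (cyl omega t) > 0 /\
    (P (cyl omega t) = 0 \/
     exists E, Sigma E /\ Rabs (cond P E omega t - cond Q E omega t) > eps).

Definition merges (Sigma : event -> Prop) (P Q : event -> R) : Prop :=
  forall eps, eps > 0 -> Un_cv (fun t => Q (bad_set Sigma P Q eps t)) 0.

Definition abs_cont (Sigma : event -> Prop) (Q P : event -> R) : Prop :=
  forall En : nat -> event, (forall n, Sigma (En n)) ->
    Un_cv (fun n => P (En n)) 0 -> Un_cv (fun n => Q (En n)) 0.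

Definition Delta_BD (Sigma : event -> Prop) (P : event -> R) : Prop :=
  is_fap Sigma P /\ strongly_nonatomic Sigma P /\
  (forall Q, is_fap Sigma Q -> abs_cont Sigma Q P -> merges Sigma P Q).

(* If the theorem failed, then for every level N some cylinder of length N
   would have mass > eps, and König's lemma would give a path om all of whose
   cylinders om^t have mass > eps, hence mass tending to some delta > 0.
   Split a cylinder om^t1 of mass close to delta into two halves, keep one
   half G, and let Q be (the normalised limit of) P restricted to G and to
   ever smaller cylinders around om.  Then Q << P and Q(om^t) = 1 for all t,
   but Q(G | om^t) = 1 while P(G | om^t) <= 3/4, so P does not merge with Q. *)

From Stdlib Require Import Reals Lra Lia Classical ClassicalEpsilon
  FunctionalExtensionality PropExtensionality.
Open Scope R_scope.

Lemma event_ext (E F : event) : (forall w, E w <-> F w) -> E = F.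
Proof.
  intros H; apply functional_extensionality; intro w.
  apply propositional_extensionality; auto.
Qed.

Lemma cyl_ext (a b : Omega) t :
  (forall i, (i < t)%nat -> a i = b i) -> cyl a t = cyl b t.
Proof.
  intros H; apply event_ext; intros w; unfold cyl.
  split; intros Hw i Hi; rewrite Hw by auto; [apply H | symmetry; apply H]; auto.
Qed.

Lemma cyl_antimono (w : Omega) s t : (t <= s)%nat -> subset (cyl w s) (cyl w t).
Proof. intros Hts v Hv i Hi; apply Hv; lia. Qed.

Section SigmaAlgebra.
Variable Sigma : event -> Prop.
Hypothesis hS : is_sigma_algebra Sigma.

Lemma sigma_full : Sigma fullset.
Proof. apply hS. Qed.

Lemma sigma_compl E : Sigma E -> Sigma (compl E).
Proof. apply hS. Qed.

Lemma sigma_union E F : Sigma E -> Sigma F -> Sigma (union E F).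
Proof.
  intros HE HF.
  replace (union E F) with
    (fun w => exists n, (match n with 0%nat => E | _ => F end) w).
  - apply hS; intros [|n]; auto.
  - apply event_ext; intros w; unfold union; split.
    + intros [[|n] H]; auto.
    + intros [H|H]; [exists 0%nat | exists 1%nat]; auto.
Qed.

Lemma sigma_inter E F : Sigma E -> Sigma F -> Sigma (inter E F).
Proof.
  intros HE HF.
  replace (inter E F) with (compl (union (compl E) (compl F))).
  - apply sigma_compl, sigma_union; apply sigma_compl; auto.
  - apply event_ext; intros w; unfold compl, union, inter; tauto.
Qed.

Variable P : event -> R.
Hypothesis hP : is_fap Sigma P.

Lemma fap_ge0 E : Sigma E -> 0 <= P E.
Proof. apply hP. Qed.

Lemma fap_add E F :
  Sigma E -> Sigma F -> disjoint E F -> P (union E F) = P E + P F.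
Proof. apply hP. Qed.

Lemma fap_split E F : Sigma E -> Sigma F ->
  P E = P (inter E F) + P (inter E (compl F)).
Proof.
  intros HE HF. rewrite <- fap_add.
  - f_equal; apply event_ext; intros w; unfold union, inter, compl; tauto.
  - apply sigma_inter; auto.
  - apply sigma_inter; auto using sigma_compl.
  - intros w [_ H1] [_ H2]; auto.
Qed.

Lemma fap_mono E F : Sigma E -> Sigma F -> subset E F -> P E <= P F.
Proof.
  intros HE HF Hs. rewrite (fap_split F E HF HE).
  replace (inter F E) with E.
  - assert (0 <= P (inter F (compl E))).
    { apply fap_ge0, sigma_inter; auto using sigma_compl. }
    lra.
  - apply event_ext; intros w; unfold inter; split; auto; tauto.
Qed.

Hypothesis hcyl : contains_cylinders Sigma.

Lemma fap_cyl_antimono w s t : (t <= s)%nat -> P (cyl w s) <= P (cyl w t).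
Proof. intros; apply fap_mono; auto using cyl_antimono. Qed.

End SigmaAlgebra.

Lemma decreasing_ge0_cv (u : nat -> R) :
  Un_decreasing u -> (forall n, 0 <= u n) -> exists l, Un_cv u l.
Proof.
  intros Hd H0. destruct (decreasing_cv u Hd) as [l Hl]; eauto.
  exists 0. intros x [i ->]. unfold opp_seq. specialize (H0 i). lra.
Qed.

Lemma Un_cv_ge_eventually (u : nat -> R) l c N :
  Un_cv u l -> (forall n, (N <= n)%nat -> c <= u n) -> c <= l.
Proof.
  intros Hl Hc. destruct (Rle_or_lt c l); auto.
  destruct (Hl (c - l)) as [M HM]; [lra|].
  specialize (HM (max N M) ltac:(lia)). specialize (Hc (max N M) ltac:(lia)).
  unfold Rdist in HM. apply Rabs_def2 in HM. lra.
Qed.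

Lemma Un_cv_le_eventually (u : nat -> R) l c N :
  Un_cv u l -> (forall n, (N <= n)%nat -> u n <= c) -> l <= c.
Proof.
  intros Hl Hc. destruct (Rle_or_lt l c); auto.
  destruct (Hl (l - c)) as [M HM]; [lra|].
  specialize (HM (max N M) ltac:(lia)). specialize (Hc (max N M) ltac:(lia)).
  unfold Rdist in HM. apply Rabs_def2 in HM. lra.
Qed.

Lemma Un_cv_eventually_eq (u v : nat -> R) l N :
  Un_cv u l -> (forall n, (N <= n)%nat -> v n = u n) -> Un_cv v l.
Proof.
  intros Hl Hv e He. destruct (Hl e He) as [M HM]. exists (max N M).
  intros n Hn. rewrite Hv by lia. apply HM; lia.
Qed.

(* The limit of u if it converges (an arbitrary real otherwise). *)
Definition lim (u : nat -> R) : R := epsilon (inhabits 0) (Un_cv u).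

Lemma lim_eq u l : Un_cv u l -> lim u = l.
Proof.
  intros H. apply (UL_sequence u); auto.
  apply (epsilon_spec (inhabits 0) (Un_cv u)). eauto.
Qed.

(* The number whose binary digits (least significant first) are w 0, ..., w (N-1). *)
Fixpoint prefix_code (w : Omega) (N : nat) : nat :=
  match N with
  | 0 => 0%nat
  | S N' => (2 * prefix_code (fun k => w (S k)) N' + Nat.b2n (w 0%nat))%nat
  end.

Lemma prefix_code_spec N : forall w, (prefix_code w N < 2 ^ N)%nat /\
  forall k, (k < N)%nat -> Nat.testbit (prefix_code w N) k = w k.
Proof.
  induction N as [|N IH]; intros w; cbn [prefix_code].
  - split; [simpl; lia | intros; lia].
  - destruct (IH (fun k => w (S k))) as [Hlt Hbits]. split.
    + rewrite Nat.pow_succ_r'. destruct (w 0%nat); simpl Nat.b2n; lia.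
    + intros [|k] Hk; destruct (w 0%nat); simpl Nat.b2n.
      * apply Nat.testbit_odd_0.
      * rewrite Nat.add_0_r; apply Nat.testbit_even_0.
      * change (S k) with (Nat.succ k).
        rewrite Nat.testbit_odd_succ by lia. apply Hbits; lia.
      * change (S k) with (Nat.succ k).
        rewrite Nat.add_0_r, Nat.testbit_even_succ by lia. apply Hbits; lia.
Qed.

Lemma testbit_ge_pow2 i N k :
  (i < 2 ^ N)%nat -> (N <= k)%nat -> Nat.testbit i k = false.
Proof.
  intros Hi Hk. destruct (Nat.eq_dec i 0) as [->|Hne]; [apply Nat.bits_0|].
  apply Nat.bits_above_log2. apply Nat.log2_lt_pow2 in Hi; lia.
Qed.

Lemma level_partition (P : event -> R) eps N :
  (forall w, P (cyl w N) <= eps) ->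
  exists (n : nat) (C : nat -> event),
    (forall i, (i < n)%nat -> is_cylinder (C i)) /\
    (forall i j, (i < n)%nat -> (j < n)%nat -> i <> j -> disjoint (C i) (C j)) /\
    (forall w, exists i, (i < n)%nat /\ C i w) /\
    (forall i, (i < n)%nat -> P (C i) <= eps).
Proof.
  intros HN. exists (2 ^ N)%nat, (fun i => cyl (Nat.testbit i) N).
  split; [|split; [|split]].
  - intros i _; exists (Nat.testbit i), N; reflexivity.
  - intros i j Hi Hj Hij w Hwi Hwj. apply Hij, Nat.bits_inj. intros k.
    destruct (Nat.lt_ge_cases k N) as [Hk|Hk].
    + rewrite <- (Hwi k Hk), (Hwj k Hk); auto.
    + rewrite (testbit_ge_pow2 i N k), (testbit_ge_pow2 j N k); auto.
  - intros w. destruct (prefix_code_spec N w) as [Hlt Hbits].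
    exists (prefix_code w N); split; auto.
    intros k Hk; symmetry; auto.
  - intros i _; apply HN.
Qed.

Section Konig.
Variable P : event -> R.
Variable eps : R.
Hypothesis P_cyl_antimono :
  forall w t N, (t <= N)%nat -> P (cyl w N) <= P (cyl w t).

Definition extendable (v : Omega) (t : nat) : Prop :=
  forall N, (t <= N)%nat -> exists w, cyl v t w /\ P (cyl w N) > eps.

Definition set_bit (v : Omega) (t : nat) (b : bool) : Omega :=
  fun i => if Nat.eqb i t then b else v i.

Lemma extendable_step v t : extendable v t ->
  extendable (set_bit v t true) (S t) \/ extendable (set_bit v t false) (S t).
Proof.
  intros H. apply NNPP; intros Hn. apply not_or_and in Hn as [Htrue Hfalse].
  apply not_all_ex_not in Htrue as [N1 Htrue].
  apply not_all_ex_not in Hfalse as [N2 Hfalse].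
  apply imply_to_and in Htrue as [HN1 Htrue].
  apply imply_to_and in Hfalse as [HN2 Hfalse].
  destruct (H (max N1 N2) ltac:(lia)) as [w [Hw Hheavy]].
  assert (Hprefix : forall b, w t = b -> cyl (set_bit v t b) (S t) w).
  { intros b Hb i Hi. unfold set_bit.
    destruct (Nat.eqb_spec i t); subst; auto. apply Hw; lia. }
  destruct (w t) eqn:Ewt.
  - apply Htrue. exists w; split; auto.
    pose proof (P_cyl_antimono w N1 (max N1 N2) ltac:(lia)); lra.
  - apply Hfalse. exists w; split; auto.
    pose proof (P_cyl_antimono w N2 (max N1 N2) ltac:(lia)); lra.
Qed.

Definition next_bit (v : Omega) (t : nat) : bool :=
  if excluded_middle_informative (extendable (set_bit v t true) (S t))
  then true else false.

Fixpoint konig_prefix (t : nat) : Omega :=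
  match t with
  | 0 => fun _ => false
  | S t' => set_bit (konig_prefix t') t' (next_bit (konig_prefix t') t')
  end.

Lemma konig_prefix_extendable :
  extendable (fun _ => false) 0 -> forall t, extendable (konig_prefix t) t.
Proof.
  intros H0 t. induction t as [|t IH]; simpl; auto.
  unfold next_bit. destruct (excluded_middle_informative _); auto.
  destruct (extendable_step _ _ IH); tauto.
Qed.

Lemma konig_prefix_stable t t' :
  (t <= t')%nat -> forall i, (i < t)%nat -> konig_prefix t' i = konig_prefix t i.
Proof.
  intros Ht. induction Ht; intros i Hi; auto.
  simpl. unfold set_bit. destruct (Nat.eqb_spec i m); [lia | auto].
Qed.

Lemma konig : (forall N, exists w, P (cyl w N) > eps) ->
  exists om, forall t, P (cyl om t) > eps.
Proof.
  intros H. assert (H0 : extendable (fun _ => false) 0).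
  { intros N _. destruct (H N) as [w Hw]. exists w; split; auto.
    intros i Hi; lia. }
  exists (fun i => konig_prefix (S i) i). intros t.
  destruct (konig_prefix_extendable H0 t t ltac:(lia)) as [w [Hw Hheavy]].
  replace (cyl (fun i => konig_prefix (S i) i) t) with (cyl w t); auto.
  apply cyl_ext. intros i Hi. rewrite Hw by auto.
  apply (konig_prefix_stable (S i) t); lia.
Qed.

End Konig.

Section Germ.
Variable Sigma : event -> Prop.
Hypothesis hS : is_sigma_algebra Sigma.
Hypothesis hcyl : contains_cylinders Sigma.
Variable P : event -> R.
Hypothesis hP : is_fap Sigma P.
Variable om : Omega.
Variable G : event.
Hypothesis hG : Sigma G.

Definition germ_seq (E : event) (s : nat) : R := P (inter (inter E G) (cyl om s)).
Definition germ_mass (E : event) : R := lim (germ_seq E).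

Lemma sigma_germ_event E s : Sigma E -> Sigma (inter (inter E G) (cyl om s)).
Proof. intros; apply sigma_inter, hcyl; auto. apply sigma_inter; auto. Qed.

Lemma germ_seq_cv E : Sigma E -> Un_cv (germ_seq E) (germ_mass E).
Proof.
  intros HE. destruct (decreasing_ge0_cv (germ_seq E)) as [l Hl].
  - intros n; apply (fap_mono Sigma hS P hP); try apply sigma_germ_event; auto.
    intros w [H1 H2]; split; auto. apply (cyl_antimono om (S n) n); auto.
  - intros n; apply (fap_ge0 Sigma P hP), sigma_germ_event; auto.
  - unfold germ_mass; rewrite (lim_eq _ l Hl); auto.
Qed.

Lemma germ_mass_bounds E : Sigma E -> 0 <= germ_mass E <= P E.
Proof.
  intros HE. split.
  - apply (Un_cv_ge_eventually _ _ 0 0 (germ_seq_cv E HE)). intros n _.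
    apply (fap_ge0 Sigma P hP), sigma_germ_event; auto.
  - apply (Un_cv_le_eventually _ _ (P E) 0 (germ_seq_cv E HE)). intros n _.
    apply (fap_mono Sigma hS P hP); try apply sigma_germ_event; auto.
    intros w [[H _] _]; auto.
Qed.

Hypothesis hmass : germ_mass fullset > 0.

Definition germ_prob (E : event) : R := germ_mass E / germ_mass fullset.

Lemma germ_prob_one X t : (forall w, G w -> cyl om t w -> X w) -> germ_prob X = 1.
Proof.
  intros HX. unfold germ_prob.
  replace (germ_mass X) with (germ_mass fullset); [field; lra|].
  symmetry; apply lim_eq.
  apply (Un_cv_eventually_eq _ _ _ t (germ_seq_cv fullset (sigma_full Sigma hS))).
  intros n Hn; unfold germ_seq; f_equal.
  apply event_ext; intros w; unfold inter, fullset. split; [tauto|].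
  intros [[_ HGw] Hw]; repeat split; auto.
  apply HX; auto. apply (cyl_antimono om n t); auto.
Qed.

Lemma germ_mass_add E F : Sigma E -> Sigma F -> disjoint E F ->
  germ_mass (union E F) = germ_mass E + germ_mass F.
Proof.
  intros HE HF Hd. apply lim_eq.
  apply (Un_cv_eventually_eq (fun s => germ_seq E s + germ_seq F s) _ _ 0).
  - apply CV_plus; apply germ_seq_cv; auto.
  - intros n _. unfold germ_seq. rewrite <- (fap_add Sigma P hP).
    + f_equal; apply event_ext; intros w; unfold inter, union; tauto.
    + apply sigma_germ_event; auto.
    + apply sigma_germ_event; auto.
    + intros w [[H1 _] _] [[H2 _] _]; apply (Hd w); auto.
Qed.

Lemma germ_prob_fap : is_fap Sigma germ_prob.
Proof.
  split; [|split].
  - apply (germ_prob_one fullset 0). intros; exact I.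
  - intros E HE. destruct (germ_mass_bounds E HE).
    unfold germ_prob, Rdiv. apply Rmult_le_pos; auto.
    left; apply Rinv_0_lt_compat; auto.
  - intros E F HE HF Hd. unfold germ_prob.
    rewrite germ_mass_add by auto. unfold Rdiv; ring.
Qed.

(* Because germ_prob E <= P E / germ_mass fullset. *)
Lemma germ_prob_abs_cont : abs_cont Sigma germ_prob P.
Proof.
  intros En HEn Hcv e He. set (L := germ_mass fullset) in *.
  destruct (Hcv (e * L)) as [N HN]; [apply Rmult_lt_0_compat; lra|].
  exists N. intros n Hn. specialize (HN n Hn). unfold Rdist in *.
  rewrite Rminus_0_r in *. apply Rabs_def2 in HN.
  destruct (germ_mass_bounds (En n) (HEn n)) as [B0 B1].
  unfold germ_prob. fold L. set (q := germ_mass (En n) / L).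
  assert (Hq : q * L = germ_mass (En n)) by (unfold q; field; lra).
  assert (0 <= q) by nra.
  rewrite Rabs_pos_eq by auto. nra.
Qed.

End Germ.

Section NonMerging.
Variable Sigma : event -> Prop.
Hypothesis hS : is_sigma_algebra Sigma.
Hypothesis hcyl : contains_cylinders Sigma.
Variable P : event -> R.
Hypothesis hP : is_fap Sigma P.
Variable om : Omega.
Variables (delta : R) (t1 : nat) (G : event).
Hypothesis cyl_cv : Un_cv (fun t => P (cyl om t)) delta.
Hypothesis delta_pos : delta > 0.
Hypothesis cyl_t1_small : P (cyl om t1) < 3/2 * delta.
Hypothesis hG : Sigma G.
Hypothesis G_sub : subset G (cyl om t1).
Hypothesis G_half : P G = 1/2 * P (cyl om t1).

Lemma delta_le_cyl t : delta <= P (cyl om t).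
Proof.
  apply (decreasing_ineq (fun t => P (cyl om t))); auto.
  intros n; apply (fap_cyl_antimono Sigma hS P hP hcyl); lia.
Qed.

(* Past t1, the part of om^s outside G has mass <= P(om^t1)/2 < 3/4 delta. *)
Lemma germ_seq_full_lb s :
  (t1 <= s)%nat -> delta / 4 <= germ_seq P om G fullset s.
Proof.
  intros Hs. unfold germ_seq.
  replace (inter (inter fullset G) (cyl om s)) with (inter (cyl om s) G)
    by (apply event_ext; intros w; unfold inter, fullset; tauto).
  pose proof (fap_split Sigma hS P hP (cyl om s) G (hcyl _ _) hG) as Hs_split.
  pose proof (fap_split Sigma hS P hP (cyl om t1) G (hcyl _ _) hG) as Ht1_split.
  replace (inter (cyl om t1) G) with G in Ht1_split
    by (apply event_ext; intros w; unfold inter; split; [auto | tauto]).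
  assert (P (inter (cyl om s) (compl G)) <= P (inter (cyl om t1) (compl G))).
  { pose proof (sigma_compl Sigma hS G hG).
    apply (fap_mono Sigma hS P hP); try apply (sigma_inter Sigma hS); auto.
    intros w [H1 H2]; split; auto. apply (cyl_antimono om s t1); auto. }
  pose proof (delta_le_cyl s). lra.
Qed.

Lemma germ_mass_full_pos : germ_mass P om G fullset > 0.
Proof.
  assert (delta / 4 <= germ_mass P om G fullset); [|lra].
  apply (Un_cv_ge_eventually _ _ _ t1
           (germ_seq_cv Sigma hS hcyl P hP om G hG fullset (sigma_full Sigma hS))).
  apply germ_seq_full_lb.
Qed.

Lemma cond_G_le t : cond P G om t <= 3/4.
Proof.
  unfold cond. pose proof (delta_le_cyl t).
  assert (P (inter G (cyl om t)) <= P G).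
  { apply (fap_mono Sigma hS P hP); auto. apply (sigma_inter Sigma hS); auto.
    intros v [HGv _]; auto. }
  apply Rmult_le_reg_r with (P (cyl om t)); [lra|].
  unfold Rdiv; rewrite Rmult_assoc, Rinv_l by lra. lra.
Qed.

Let Q := germ_prob P om G.
Let germ_one := germ_prob_one Sigma hS hcyl P hP om G hG germ_mass_full_pos.

Lemma bad_set_germ_prob_one t : Q (bad_set Sigma P Q (1/8) t) = 1.
Proof.
  apply (germ_one _ t). intros w HGw Hw.
  assert (Hc : cyl w t = cyl om t) by (apply cyl_ext; auto).
  assert (Hcyl_one : Q (cyl om t) = 1) by (apply (germ_one _ t); auto).
  assert (HG_one : Q (inter G (cyl om t)) = 1)
    by (apply (germ_one _ t); split; auto).
  unfold bad_set. split; [rewrite Hc; lra|].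
  right. exists G. split; auto.
  pose proof (cond_G_le t) as HPcond.
  unfold cond in *. rewrite Hc, Hcyl_one, HG_one.
  rewrite Rabs_left; lra.
Qed.

Lemma not_merges_germ_prob : ~ merges Sigma P Q.
Proof.
  intros Hm. destruct (Hm (1/8) ltac:(lra) (1/2) ltac:(lra)) as [N HN].
  specialize (HN N (le_n N)). unfold Rdist in HN.
  rewrite bad_set_germ_prob_one, Rminus_0_r, Rabs_R1 in HN. lra.
Qed.

Lemma exists_abs_cont_not_merging :
  exists Q, is_fap Sigma Q /\ abs_cont Sigma Q P /\ ~ merges Sigma P Q.
Proof.
  exists Q. split; [|split].
  - exact (germ_prob_fap Sigma hS hcyl P hP om G hG germ_mass_full_pos).
  - exact (germ_prob_abs_cont Sigma hS hcyl P hP om G hG germ_mass_full_pos).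
  - apply not_merges_germ_prob.
Qed.

End NonMerging.

Lemma Delta_BD_cyl_small (Sigma : event -> Prop) (P : event -> R) :
  is_sigma_algebra Sigma -> contains_cylinders Sigma -> Delta_BD Sigma P ->
  forall om eps, eps > 0 -> exists t, P (cyl om t) <= eps.
Proof.
  intros hS hcyl [hP [hsn hmerge]] om eps heps.
  apply NNPP; intros Hbig.
  assert (Hgt : forall t, P (cyl om t) > eps)
    by (intros t; apply Rnot_le_gt; intros Hle; apply Hbig; eauto).
  destruct (decreasing_ge0_cv (fun t => P (cyl om t))) as [delta Hcv].
  - intros n; apply (fap_cyl_antimono Sigma hS P hP hcyl); lia.
  - intros n; apply (fap_ge0 Sigma P hP), hcyl.
  - assert (eps <= delta)
      by (apply (Un_cv_ge_eventually _ _ _ 0 Hcv); intros n _; left; apply Hgt).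
    destruct (Hcv (delta / 2)) as [t1 Ht1]; [lra|].
    specialize (Ht1 t1 (le_n t1)). unfold Rdist in Ht1. apply Rabs_def2 in Ht1.
    destruct (hsn (cyl om t1) (hcyl _ _) (1/2) ltac:(lra)) as [G [HG [HGsub HGhalf]]].
    destruct (exists_abs_cont_not_merging Sigma hS hcyl P hP om delta t1 G Hcv
                ltac:(lra) ltac:(lra) HG HGsub HGhalf) as [Q [HQ [Hac Hnm]]].
    apply Hnm, hmerge; auto.
Qed.

Theorem theorem9 (Sigma : event -> Prop)
  (hSigma : is_sigma_algebra Sigma) (hcyl : contains_cylinders Sigma)
  (P : event -> R) (hP : Delta_BD Sigma P) (eps : R) (heps : eps > 0) :
  exists (n : nat) (C : nat -> event),
    (forall i, (i < n)%nat -> is_cylinder (C i)) /\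
    (forall i j, (i < n)%nat -> (j < n)%nat -> i <> j -> disjoint (C i) (C j)) /\
    (forall w, exists i, (i < n)%nat /\ C i w) /\
    (forall i, (i < n)%nat -> P (C i) <= eps).
Proof.
  destruct (classic (exists N, forall w, P (cyl w N) <= eps)) as [[N HN]|Hno].
  - exact (level_partition P eps N HN).
  - exfalso.
    assert (Hheavy : forall N, exists w, P (cyl w N) > eps).
    { intros N. apply NNPP; intros Hn. apply Hno. exists N. intros w.
      apply Rnot_gt_le. intros Hgt. apply Hn. eauto. }
    destruct (konig P eps
                (fun w t N Ht => fap_cyl_antimono Sigma hSigma P (proj1 hP) hcyl w N t Ht)
                Hheavy) as [om Hom].
    destruct (Delta_BD_cyl_small Sigma P hSigma hcyl hP om eps heps) as [t Ht].
    specialize (Hom t). lra.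
Qed.
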